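(* Let $0<q<1$, $\alpha>-1$ and let $n\ge0$ be an integer. The matrix $\big((q^{\alpha+1};q)_{j+k}\big)_{j,k=0}^{n}$ is invertible and \[ \big((q^{\alpha+1};q)_{j+k}\big)_{j,k=0}^{n}{}^{-1}=\left(\sum_{m=0}^{n}\frac{q^{j+k}\,(q^{\alpha+1};q)_m\,(q^{-m};q)_j\,(q^{-m};q)_k}{(q;q)_j\,(q;q)_k\,(q^{\alpha+1};q)_j\,(q^{\alpha+1};q)_k\,(q;q)_m\,q^{(\alpha+1)m}}\right)_{j,k=0}^{n}. \]
   Context: $(a;q)_m=\prod_{i=0}^{m-1}(1-aq^i)$ for integers $m\ge0$ (empty product $=1$); in particular $(q^{-m};q)_j=0$ for $j>m$. *)

From Stdlib Require Import Reals.
Open Scope R_scope.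

Fixpoint qpoch (a q : R) (m : nat) : R :=
  match m with
  | O => 1
  | S m' => qpoch a q m' * (1 - a * q ^ m')
  end.

(* Square (n+1)x(n+1) matrices indexed by j,k = 0..n, represented as functions.
   B is the (two-sided) inverse of A: A*B = I and B*A = I. *)
Definition is_inverse_matrix (n : nat) (A B : nat -> nat -> R) : Prop :=
  forall j k : nat, (j <= n)%nat -> (k <= n)%nat ->
    sum_f_R0 (fun i => A j i * B i k) n = (if Nat.eqb j k then 1 else 0) /\
    sum_f_R0 (fun i => B j i * A i k) n = (if Nat.eqb j k then 1 else 0).

(* Write a = q^(alpha+1), so that 0 < a < 1; the real powers q^(-m) and
   q^((alpha+1) m) of the statement become /q^m and a^m.
     Summing the product A B first over the column index of A (by
     q-Chu-Vandermonde) and then over m (by orthogonality) gives A B = I.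
   - Both matrices are symmetric, so B A = I as well, which is the theorem. *)

From Stdlib Require Import Reals Lra Lia Arith.
Open Scope R_scope.

(* [rsum N f] is the sum f 0 + ... + f (N-1); unlike [sum_f_R0] it allows
   the empty sum, which makes splitting and reindexing uniform. *)
Fixpoint rsum (N : nat) (f : nat -> R) : R :=
  match N with O => 0 | S N' => rsum N' f + f N' end.

Lemma sum_f_R0_rsum (f : nat -> R) (n : nat) : sum_f_R0 f n = rsum (S n) f.
Proof. induction n as [|n IH]; simpl; [ring | now rewrite IH]. Qed.

Lemma rsum_ext (N : nat) (f g : nat -> R) :
  (forall i, (i < N)%nat -> f i = g i) -> rsum N f = rsum N g.
Proof.
  induction N as [|N IH]; intros H; simpl; [reflexivity|].
  rewrite IH by (intros; apply H; lia). now rewrite H by lia.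
Qed.

Lemma rsum_eq0 (N : nat) (f : nat -> R) :
  (forall i, (i < N)%nat -> f i = 0) -> rsum N f = 0.
Proof.
  induction N as [|N IH]; intros H; simpl; [reflexivity|].
  rewrite IH by (intros; apply H; lia). rewrite H by lia. ring.
Qed.

Lemma rsum_scal (N : nat) (c : R) (f : nat -> R) :
  c * rsum N f = rsum N (fun i => c * f i).
Proof. induction N as [|N IH]; simpl; [ring|]. rewrite <- IH. ring. Qed.

Lemma rsum_plus (N : nat) (f g : nat -> R) :
  rsum N (fun i => f i + g i) = rsum N f + rsum N g.
Proof. induction N as [|N IH]; simpl; [ring|]. rewrite IH. ring. Qed.

Lemma rsum_swap (N M : nat) (f : nat -> nat -> R) :
  rsum N (fun i => rsum M (f i)) = rsum M (fun j => rsum N (fun i => f i j)).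
Proof.
  induction N as [|N IH]; simpl.
  - symmetry. now apply rsum_eq0.
  - rewrite IH, <- rsum_plus. reflexivity.
Qed.

Lemma rsum_split (m N : nat) (f : nat -> R) :
  rsum (m + N) f = rsum m f + rsum N (fun s => f (m + s)%nat).
Proof.
  induction N as [|N IH]; simpl.
  - rewrite Nat.add_0_r. ring.
  - rewrite Nat.add_succ_r. simpl. rewrite IH. ring.
Qed.

Lemma rsum_shift1 (N : nat) (f : nat -> R) :
  rsum (S N) f = f O + rsum N (fun i => f (S i)).
Proof. change (S N) with (1 + N)%nat. rewrite rsum_split. simpl. ring. Qed.

Lemma rsum_trunc (N M : nat) (f : nat -> R) :
  (N <= M)%nat -> (forall i, (N <= i < M)%nat -> f i = 0) -> rsum M f = rsum N f.
Proof.
  intros HNM Hf. replace M with (N + (M - N))%nat by lia.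
  rewrite rsum_split, (rsum_eq0 (M - N)); [ring|]. intros; apply Hf; lia.
Qed.

Lemma rsum_single (N p : nat) (f : nat -> R) :
  (p < N)%nat -> (forall i, (i < N)%nat -> i <> p -> f i = 0) -> rsum N f = f p.
Proof.
  intros Hp Hf. rewrite (rsum_trunc (S p) N) by (lia || (intros; apply Hf; lia)).
  simpl. rewrite rsum_eq0 by (intros; apply Hf; lia). ring.
Qed.

Lemma qpoch_shift (x q : R) (m : nat) : qpoch x q (S m) = (1 - x) * qpoch (x * q) q m.
Proof. induction m as [|m IH]; simpl in *; [ring|]. rewrite IH. ring. Qed.

Lemma qpoch_add (x q : R) (i j : nat) :
  qpoch x q (i + j) = qpoch x q i * qpoch (x * q ^ i) q j.
Proof.
  induction j as [|j IH]; simpl.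
  - rewrite Nat.add_0_r. ring.
  - rewrite Nat.add_succ_r. simpl. rewrite IH, pow_add. ring.
Qed.

Lemma qpoch_vanish (x q : R) (m t : nat) : (t < m)%nat -> x * q ^ t = 1 -> qpoch x q m = 0.
Proof.
  induction m as [|m IH]; intros Ht Hx; [lia|]. simpl.
  destruct (Nat.eq_dec t m) as [->|Hne].
  - rewrite Hx. ring.
  - rewrite IH by (auto; lia). ring.
Qed.

Lemma qpoch_pos (x q : R) (m : nat) : 0 < x < 1 -> 0 < q < 1 -> 0 < qpoch x q m.
Proof.
  intros Hx Hq. induction m as [|m IH]; simpl; [lra|].
  assert (q ^ m <= 1) by (rewrite <- (pow1 m); apply pow_incr; lra).
  assert (0 < q ^ m) by (apply pow_lt; lra).
  apply Rmult_lt_0_compat; nra.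
Qed.

Lemma is_inverse_matrix_ext (n : nat) (A A' B B' : nat -> nat -> R) :
  (forall j k, (j <= n)%nat -> (k <= n)%nat -> A j k = A' j k) ->
  (forall j k, (j <= n)%nat -> (k <= n)%nat -> B j k = B' j k) ->
  is_inverse_matrix n A' B' -> is_inverse_matrix n A B.
Proof.
  intros HA HB Hinv j k Hj Hk. destruct (Hinv j k Hj Hk) as [HAB HBA].
  split; [rewrite <- HAB | rewrite <- HBA]; apply sum_eq; intros i Hi;
    rewrite HA, HB by lia; reflexivity.
Qed.

(* For symmetric matrices a right inverse is also a left inverse,
   since B A = (A B)^T. *)
Lemma is_inverse_of_symmetric (n : nat) (A B : nat -> nat -> R) :
  (forall j k, A j k = A k j) -> (forall j k, B j k = B k j) ->
  (forall j k, (j <= n)%nat -> (k <= n)%nat ->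
     sum_f_R0 (fun i => A j i * B i k) n = if Nat.eqb j k then 1 else 0) ->
  is_inverse_matrix n A B.
Proof.
  intros HA HB HAB j k Hj Hk. split; [now apply HAB|].
  rewrite Nat.eqb_sym, <- (HAB k j Hk Hj). apply sum_eq. intros i _.
  rewrite HA, HB. ring.
Qed.

Section GaussianBinomial.
Variable q : R.

Fixpoint qbinom (m i : nat) : R :=
  match m, i with
  | O, O => 1
  | O, S _ => 0
  | S _, O => 1
  | S m', S i' => q ^ (S i') * qbinom m' (S i') + qbinom m' i'
  end.

Lemma qbinom_0 (m : nat) : qbinom m 0 = 1.
Proof. now destruct m. Qed.

Lemma qbinom_gt (m i : nat) : (m < i)%nat -> qbinom m i = 0.
Proof.
  revert i; induction m as [|m IH]; intros [|i] H; simpl; try lia; [reflexivity|].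
  rewrite !IH by lia. ring.
Qed.

Lemma qbinom_diag (m : nat) : qbinom m m = 1.
Proof. induction m as [|m IH]; simpl; [reflexivity|]. rewrite qbinom_gt, IH by lia. ring. Qed.

Lemma qbinom_factorial (m i : nat) : (i <= m)%nat ->
  qbinom m i * qpoch q q i * qpoch q q (m - i) = qpoch q q m.
Proof.
  revert i; induction m as [|m IH]; intros [|i] Him; try lia.
  - simpl. ring.
  - rewrite qbinom_0, Nat.sub_0_r. simpl. ring.
  - destruct (Nat.eq_dec i m) as [->|Hne].
    { rewrite qbinom_diag, Nat.sub_diag. simpl. ring. }
    pose proof (IH (S i) ltac:(lia)) as Hsi. pose proof (IH i ltac:(lia)) as Hi.
    replace (m - i)%nat with (S (m - S i)) in Hi by lia.
    replace (S m - S i)%nat with (S (m - S i)) by lia.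
    set (d := (m - S i)%nat) in *.
    assert (Hqm : q ^ m = q ^ S i * q ^ d) by (rewrite <- pow_add; f_equal; lia).
    simpl qbinom. simpl qpoch in *.
    replace (qpoch q q m * (1 - q * q ^ m))
      with (q ^ S i * (1 - q * q ^ d) * qpoch q q m + (1 - q * q ^ i) * qpoch q q m)
      by (rewrite Hqm; simpl; ring).
    rewrite <- Hsi at 1. rewrite <- Hi. simpl. ring.
Qed.

(* The signed triangular power (-1)^i q^(i(i-1)/2), the coefficient
   pattern of the q-binomial theorem. *)
Fixpoint qtri (i : nat) : R :=
  match i with O => 1 | S i' => qtri i' * (- q ^ i') end.

Lemma qtri_add (m s : nat) : qtri (m + s) = qtri m * qtri s * q ^ (m * s).
Proof.
  induction s as [|s IH].
  - rewrite Nat.add_0_r, Nat.mul_0_r. simpl. ring.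
  - rewrite Nat.add_succ_r, Nat.mul_succ_r. simpl qtri. rewrite IH, !pow_add. ring.
Qed.

Lemma qtri_sq (j : nat) : qtri j * qtri j * q ^ j = q ^ (j * j).
Proof.
  induction j as [|j IH]; [simpl; ring|].
  replace (S j * S j)%nat with (j * j + j + j + 1)%nat by lia.
  rewrite !pow_add, <- IH. simpl. ring.
Qed.

Lemma qbinomial_term_pascal (m i : nat) (w : R) :
  qbinom (S m) (S i) * qtri (S i) * w ^ S i
  = qbinom m (S i) * qtri (S i) * (q * w) ^ S i
    + - w * (qbinom m i * qtri i * (q * w) ^ i).
Proof. simpl. rewrite !Rpow_mult_distr. ring. Qed.

Lemma qbinomial_theorem (m N : nat) (w : R) : (m < N)%nat ->
  rsum N (fun i => qbinom m i * qtri i * w ^ i) = qpoch w q m.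
Proof.
  intros HN. rewrite (rsum_trunc (S m) N)
    by (lia || (intros; rewrite qbinom_gt by lia; ring)).
  clear N HN. revert w. induction m as [|m IH]; intros w; [simpl; ring|].
  (* Split off the i = 0 term; Pascal's rule turns the rest into the
     expansions at q w, which are known by induction. *)
  rewrite rsum_shift1.
  rewrite (rsum_ext (S m) _ _ (fun i _ => qbinomial_term_pascal m i w)).
  rewrite rsum_plus, <- rsum_scal, IH.
  pose proof (IH (q * w)) as Hqw. rewrite rsum_shift1 in Hqw.
  rewrite (rsum_trunc m (S m)) by (lia || (intros; rewrite qbinom_gt by lia; ring)).
  rewrite qpoch_shift, (Rmult_comm w q), <- Hqw, !qbinom_0. simpl. ring.
Qed.

End GaussianBinomial.

(* From here on 0 < q < 1, so that all (q;q)_k and powers of q are positive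
   and the q-Pochhammer symbols at q^(-m) can be normalized. *)
Section PositiveBase.
Variable q : R.
Hypothesis Hq : 0 < q < 1.

Let qpow_pos (t : nat) : 0 < q ^ t := pow_lt q t (proj1 Hq).
Let qfact_pos (k : nat) : 0 < qpoch q q k := qpoch_pos q q k Hq Hq.

Lemma qbinom_closed (m i : nat) : (i <= m)%nat ->
  qbinom q m i = qpoch q q m / (qpoch q q i * qpoch q q (m - i)).
Proof.
  intros Him. rewrite <- (qbinom_factorial q m i Him).
  field. split; apply Rgt_not_eq, qfact_pos.
Qed.

(* The q-analogue of choosing an r-subset of a j-set and then an m-subset of it:
   [j r] [r m] = [j m] [j-m, r-m]. *)
Lemma qbinom_subset (j r m : nat) : (m <= r <= j)%nat ->
  qbinom q j r * qbinom q r m = qbinom q j m * qbinom q (j - m) (r - m).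
Proof.
  intros Hmrj. rewrite !qbinom_closed by lia.
  replace (j - m - (r - m))%nat with (j - r)%nat by lia.
  pose proof (qfact_pos r). pose proof (qfact_pos m). pose proof (qfact_pos (j - r)).
  pose proof (qfact_pos (j - m)). pose proof (qfact_pos (r - m)).
  field. repeat split; lra.
Qed.

Lemma qpoch_qinv_factorial (i d : nat) :
  qpoch (/ q ^ (i + d)) q i * qpoch q q d = qtri q i * (/ q ^ (i + d)) ^ i * qpoch q q (i + d).
Proof.
  revert d. induction i as [|i IH]; intros d; [simpl; ring|].
  pose proof (IH (S d)) as Hd. replace (i + S d)%nat with (S i + d)%nat in Hd by lia.
  set (x := / q ^ (S i + d)) in *.
  (* Since x q^(i+d+1) = 1, the new factor 1 - x q^i on the left equals
     -x q^i (1 - q^(d+1)), which accounts for the new factors on the right. *)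
  assert (Hx : x * q ^ i * (q * q ^ d) = 1).
  { unfold x. replace (S i + d)%nat with (i + S d)%nat by lia. rewrite pow_add. simpl.
    pose proof (qpow_pos i). pose proof (qpow_pos d). field. nra. }
  transitivity (- (q ^ i * x) * (qtri q i * x ^ i * qpoch q q (S i + d))); [|simpl; ring].
  rewrite <- Hd. simpl.
  transitivity (- (x * q ^ i) * qpoch x q i * qpoch q q d
                + (x * q ^ i * (q * q ^ d)) * qpoch x q i * qpoch q q d); [|ring].
  rewrite Hx. ring.
Qed.

Lemma qpoch_qinv (m i : nat) :
  qpoch (/ q ^ m) q i = qtri q i * (/ q ^ m) ^ i * qbinom q m i * qpoch q q i.
Proof.
  destruct (le_lt_dec i m) as [Him|Hmi].
  - pose proof (qpoch_qinv_factorial i (m - i)) as Hf.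
    replace (i + (m - i))%nat with m in Hf by lia.
    apply (Rmult_eq_reg_r (qpoch q q (m - i))); [|apply Rgt_not_eq, qfact_pos].
    rewrite Hf, <- (qbinom_factorial q m i Him). ring.
  - rewrite qbinom_gt by exact Hmi.
    rewrite (qpoch_vanish _ _ _ m) by (auto; field; apply Rgt_not_eq, qpow_pos). ring.
Qed.

Lemma qpoch_shifted_qinv (r m : nat) :
  qpoch (q ^ S r * / q ^ m) q m = qbinom q r m * qpoch q q m.
Proof.
  destruct (le_lt_dec m r) as [Hmr|Hrm].
  - replace (q ^ S r * / q ^ m) with (q * q ^ (r - m)).
    2:{ replace (S r) with (S (r - m) + m)%nat by lia. rewrite pow_add. simpl.
        field. apply Rgt_not_eq, qpow_pos. }
    apply (Rmult_eq_reg_l (qpoch q q (r - m))); [|apply Rgt_not_eq, qfact_pos].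
    rewrite <- qpoch_add. replace (r - m + m)%nat with r by lia.
    rewrite <- (qbinom_factorial q r m Hmr). ring.
  - rewrite qbinom_gt, Rmult_0_l by exact Hrm.
    apply (qpoch_vanish _ _ _ (m - S r)); [lia|].
    replace (q ^ m) with (q ^ S r * q ^ (m - S r)) by (rewrite <- pow_add; f_equal; lia).
    pose proof (qpow_pos (S r)). pose proof (qpow_pos (m - S r)). field. nra.
Qed.


(* First half of the q-Chu-Vandermonde sum: expanding (a q^i; q)_j and
   (q^(-m); q)_i by the q-binomial theorem and summing over i first
   leaves a single sum over r. *)
Lemma qchu_expansion (a : R) (j m N : nat) : 0 < a < 1 -> (m < N)%nat ->
  rsum N (fun i => qpoch a q (j + i) * (q ^ i * qpoch (/ q ^ m) q i / (qpoch q q i * qpoch a q i)))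
  = rsum (S j) (fun r => qbinom q j r * qtri q r * a ^ r * qbinom q r m) * qpoch q q m.
Proof.
  intros Ha HmN.
  rewrite (rsum_ext N _ (fun i => rsum (S j) (fun r => qbinom q j r * qtri q r * a ^ r
             * (qbinom q m i * qtri q i * (q ^ S r * / q ^ m) ^ i)))).
  - rewrite rsum_swap, (Rmult_comm (rsum _ _)), rsum_scal. apply rsum_ext. intros r _.
    rewrite <- rsum_scal, qbinomial_theorem, qpoch_shifted_qinv by exact HmN. ring.
  - intros i _.
    rewrite Nat.add_comm, qpoch_add, qpoch_qinv, <- (qbinomial_theorem q j (S j)) by lia.
    rewrite (Rmult_comm (qpoch a q i)), Rmult_assoc, (Rmult_comm (rsum _ _)), rsum_scal.
    apply rsum_ext. intros r _.
    pose proof (qfact_pos i). pose proof (qpoch_pos a q i Ha Hq).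
    rewrite !Rpow_mult_distr, <- !pow_mult.
    replace (S r * i)%nat with (i + i * r)%nat by lia. rewrite pow_add.
    field. split; lra.
Qed.

(* Second half: the remaining sum is again a q-binomial expansion, after
   factoring [j r] [r m] = [j m] [j-m, r-m]. *)
Lemma qbinom_weighted_sum (a : R) (j m : nat) : 0 < a < 1 ->
  rsum (S j) (fun r => qbinom q j r * qtri q r * a ^ r * qbinom q r m)
  = qbinom q j m * qtri q m * a ^ m * qpoch a q j / qpoch a q m.
Proof.
  intros Ha. pose proof (qpoch_pos a q m Ha Hq) as Ham.
  destruct (le_lt_dec m j) as [Hmj|Hjm].
  - replace (S j) with (m + S (j - m))%nat by lia. rewrite rsum_split.
    rewrite rsum_eq0 by (intros r Hr; rewrite (qbinom_gt q r m) by lia; ring).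
    rewrite (rsum_ext _ _ (fun s => qbinom q j m * qtri q m * a ^ m
                                   * (qbinom q (j - m) s * qtri q s * (a * q ^ m) ^ s))).
    + rewrite <- rsum_scal, qbinomial_theorem by lia.
      replace j with (m + (j - m))%nat at 4 by lia. rewrite qpoch_add.
      field. lra.
    + intros s Hs.
      transitivity (qbinom q j (m + s) * qbinom q (m + s) m * qtri q (m + s) * a ^ (m + s));
        [ring|].
      rewrite (qbinom_subset j (m + s) m), qtri_add by lia.
      replace (m + s - m)%nat with s by lia.
      rewrite Rpow_mult_distr, pow_add, <- !pow_mult, Nat.mul_comm. ring.
  - rewrite rsum_eq0 by (intros r Hr; rewrite (qbinom_gt q r m) by lia; ring).
    rewrite qbinom_gt by exact Hjm. field. lra.
Qed.

Lemma qchu_vandermonde (a : R) (j m N : nat) : 0 < a < 1 -> (m < N)%nat ->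
  rsum N (fun i => qpoch a q (j + i) * (q ^ i * qpoch (/ q ^ m) q i / (qpoch q q i * qpoch a q i)))
  = qpoch a q j * a ^ m * q ^ (j * m) * qpoch (/ q ^ j) q m / qpoch a q m.
Proof.
  intros Ha HmN. rewrite qchu_expansion, qbinom_weighted_sum, qpoch_qinv by assumption.
  pose proof (qpoch_pos a q m Ha Hq). pose proof (qpow_pos (j * m)).
  rewrite pow_inv, <- pow_mult. field. lra.
Qed.

Lemma qpoch_qinv_vanish (m k : nat) : (m < k)%nat -> qpoch (/ q ^ m) q k = 0.
Proof.
  intros Hmk. apply (qpoch_vanish _ _ _ m Hmk).
  field. apply Rgt_not_eq, qpow_pos.
Qed.

Lemma qorthogonality (j k N : nat) : (j < N)%nat -> (k < N)%nat ->
  rsum N (fun m => q ^ (j * m) * qpoch (/ q ^ j) q m * qpoch (/ q ^ m) q k / qpoch q q m)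
  = if Nat.eqb j k then qpoch q q k / q ^ k else 0.
Proof.
  intros Hj Hk.
  rewrite (rsum_ext _ _ (fun m => qtri q m * qbinom q j m * qpoch (/ q ^ m) q k)).
  2:{ intros m _. rewrite qpoch_qinv, pow_inv, <- pow_mult.
      pose proof (qfact_pos m). pose proof (qpow_pos (j * m)). field. lra. }
  destruct (Nat.eqb_spec j k) as [<-|Hjk]; [|destruct (Nat.lt_ge_cases j k) as [Hlt|Hge]].
  - (* Only m = j contributes: [j m] = 0 for m > j and (q^(-m);q)_j = 0 for m < j. *)
    rewrite (rsum_single N j); [|exact Hj|].
    2:{ intros m _ Hmj. destruct (Nat.lt_ge_cases j m).
        - rewrite qbinom_gt by auto. ring.
        - rewrite qpoch_qinv_vanish by lia. ring. }
    rewrite qbinom_diag, qpoch_qinv, qbinom_diag, pow_inv, <- pow_mult, <- (qtri_sq q j).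
    pose proof (qpow_pos j). pose proof (qpow_pos (j * j)).
    assert (qtri q j <> 0) by (intro E; rewrite <- (qtri_sq q j), E in *; lra).
    field. lra.
  - apply rsum_eq0. intros m _. destruct (Nat.lt_ge_cases j m).
    + rewrite qbinom_gt by auto. ring.
    + rewrite qpoch_qinv_vanish by lia. ring.
  - (* Expanding (q^(-m);q)_k = sum_t [k t] qtri t q^(-mt) and summing over m
       first produces (q^(-t);q)_j, which vanishes since t <= k < j. *)
    rewrite (rsum_ext _ _ (fun m => rsum (S k) (fun t => qbinom q k t * qtri q t
                                   * (qtri q m * qbinom q j m * (/ q ^ t) ^ m)))).
    2:{ intros m _. rewrite <- (qbinomial_theorem q k (S k)), rsum_scal by lia.
        apply rsum_ext. intros t _. rewrite !pow_inv, <- !pow_mult, Nat.mul_comm. ring. }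
    rewrite rsum_swap. apply rsum_eq0. intros t Ht.
    rewrite <- rsum_scal.
    rewrite (rsum_ext _ _ (fun m => qbinom q j m * qtri q m * (/ q ^ t) ^ m)) by (intros; ring).
    rewrite qbinomial_theorem, qpoch_qinv_vanish by lia. ring.
Qed.

Definition qhankel (a : R) (j k : nat) : R := qpoch a q (j + k).

Definition qhankel_inv (a : R) (n j k : nat) : R :=
  rsum (S n) (fun m => q ^ (j + k) * qpoch a q m * qpoch (/ q ^ m) q j * qpoch (/ q ^ m) q k
    / (qpoch q q j * qpoch q q k * qpoch a q j * qpoch a q k * qpoch q q m * a ^ m)).

Lemma qhankel_sym (a : R) (j k : nat) : qhankel a j k = qhankel a k j.
Proof. unfold qhankel. now rewrite Nat.add_comm. Qed.

Lemma qhankel_inv_sym (a : R) (n j k : nat) : qhankel_inv a n j k = qhankel_inv a n k j.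
Proof.
  unfold qhankel_inv. apply rsum_ext. intros m _.
  rewrite (Nat.add_comm j k). unfold Rdiv. f_equal; [ring | f_equal; ring].
Qed.

(* Product of the Hankel matrix with its claimed inverse, for any 0 < a < 1:
   sum over i first by q-Chu-Vandermonde, then over m by orthogonality. *)
Lemma qhankel_mul_inv (a : R) (n j k : nat) : 0 < a < 1 -> (j <= n)%nat -> (k <= n)%nat ->
  rsum (S n) (fun i => qhankel a j i * qhankel_inv a n i k) = if Nat.eqb j k then 1 else 0.
Proof.
  intros Ha Hj Hk. unfold qhankel, qhankel_inv.
  pose proof (qfact_pos k) as Hqk. pose proof (qpoch_pos a q k Ha Hq) as Hak.
  set (C := fun m => q ^ k * qpoch a q m * qpoch (/ q ^ m) q k
                     / (qpoch q q k * qpoch a q k * qpoch q q m * a ^ m)).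
  rewrite (rsum_ext _ _ (fun i => rsum (S n) (fun m => C m
     * (qpoch a q (j + i) * (q ^ i * qpoch (/ q ^ m) q i / (qpoch q q i * qpoch a q i)))))).
  2:{ intros i _. rewrite rsum_scal. apply rsum_ext. intros m _. unfold C.
      pose proof (qfact_pos i). pose proof (qfact_pos m). pose proof (qpoch_pos a q i Ha Hq).
      pose proof (qpoch_pos a q m Ha Hq). pose proof (pow_lt a m (proj1 Ha)).
      rewrite pow_add. field. repeat split; lra. }
  rewrite rsum_swap.
  rewrite (rsum_ext _ _ (fun m => qpoch a q j * q ^ k / (qpoch q q k * qpoch a q k)
     * (q ^ (j * m) * qpoch (/ q ^ j) q m * qpoch (/ q ^ m) q k / qpoch q q m))).
  2:{ intros m Hm. rewrite <- rsum_scal, qchu_vandermonde by assumption. unfold C.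
      pose proof (qfact_pos m). pose proof (qpoch_pos a q m Ha Hq).
      pose proof (pow_lt a m (proj1 Ha)). field. repeat split; lra. }
  rewrite <- rsum_scal, qorthogonality by lia.
  destruct (Nat.eqb_spec j k) as [<-|_]; [|ring].
  pose proof (qpow_pos j). field. repeat split; lra.
Qed.

End PositiveBase.

Lemma Rpower_opp_nat (x : R) (m : nat) : 0 < x -> Rpower x (- INR m) = / x ^ m.
Proof. intros Hx. now rewrite Rpower_Ropp, Rpower_pow. Qed.

Lemma Rpower_mult_nat (x y : R) (m : nat) : 0 < x -> Rpower x (y * INR m) = Rpower x y ^ m.
Proof. intros Hx. rewrite <- Rpower_mult. apply Rpower_pow, exp_pos. Qed.

Lemma Rpower_in_unit (q y : R) : 0 < q < 1 -> 0 < y -> 0 < Rpower q y < 1.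
Proof.
  intros Hq Hy. split; [apply exp_pos|].
  pose proof (Rlt_Rpower_l q 1 y Hy ltac:(lra)) as Hlt.
  unfold Rpower at 2 in Hlt. now rewrite ln_1, Rmult_0_r, exp_0 in Hlt.
Qed.

Theorem mainTheorem12 (q alpha : R) (n : nat) :
  0 < q < 1 -> alpha > -1 ->
  is_inverse_matrix n
    (fun j k => qpoch (Rpower q (alpha + 1)) q (j + k))
    (fun j k => sum_f_R0 (fun m =>
        q ^ (j + k) * qpoch (Rpower q (alpha + 1)) q m
          * qpoch (Rpower q (- INR m)) q j * qpoch (Rpower q (- INR m)) q k
        / (qpoch q q j * qpoch q q k
           * qpoch (Rpower q (alpha + 1)) q j * qpoch (Rpower q (alpha + 1)) q k
           * qpoch q q m * Rpower q ((alpha + 1) * INR m))) n).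
Proof.
  intros Hq Halpha.
  pose proof (Rpower_in_unit q (alpha + 1) Hq ltac:(lra)) as Ha.
  set (a := Rpower q (alpha + 1)) in *.
  apply (is_inverse_matrix_ext n _ (qhankel q a) _ (qhankel_inv q a n)).
  - intros j k _ _. reflexivity.
  - intros j k _ _. unfold qhankel_inv. rewrite sum_f_R0_rsum. apply rsum_ext.
    intros m _. rewrite Rpower_opp_nat, Rpower_mult_nat by lra. reflexivity.
  - apply is_inverse_of_symmetric; [apply qhankel_sym | apply qhankel_inv_sym|].
    intros j k Hj Hk. rewrite sum_f_R0_rsum. now apply qhankel_mul_inv.
Qed.
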